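(* Let $p$ be a positive integer and write $2p=3m+r$ with $r\in\{0,1,2\}$, and assume $m\ge 3$. Let $I$ be a configuration of $2p$ colored chips containing at least $m$ chips of each of the three colors (and no jokers or dominoes). Then there is a sequence of at most $p+4r+8\le p+16$ exchanges taking $I$ to a configuration with at least $p$ dominoes.
   Context: Game model: a configuration is a tuple $(a,b,c,x,d)$ of nonnegative integers: $a,b,c$ colored chips of three colors, $x$ jokers, $d$ dominoes. Exchanges: Rule 1: remove three chips, consisting of some number $j\in\{0,1,2,3\}$ of jokers together with $3-j$ colored chips of pairwise distinct colors, and add one domino and one joker. Rule 2: if $d\ge 3$, remove three dominoes and add seven jokers. *)

From Stdlib Require Import Arith Lia.

Record config : Type := Config {
  col_a : nat; col_b : nat; col_c : nat; jokers : nat; dominoes : nat }.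

(* Rule 1: remove j jokers and 3 - j colored chips of pairwise distinct colors
   (ua, ub, uc in {0,1} indicate which colors are used), add one domino and
   one joker. *)
Inductive exchange : config -> config -> Prop :=
| rule1 (a b c x d ua ub uc j : nat) :
    ua <= 1 -> ub <= 1 -> uc <= 1 -> ua + ub + uc + j = 3 ->
    ua <= a -> ub <= b -> uc <= c -> j <= x ->
    exchange (Config a b c x d) (Config (a - ua) (b - ub) (c - uc) (x - j + 1) (d + 1))
| rule2 (a b c x d : nat) :
    3 <= d ->
    exchange (Config a b c x d) (Config a b c (x + 7) (d - 3)).

Inductive exchanges : nat -> config -> config -> Prop :=
| ex_refl (I : config) : exchanges 0 I I
| ex_step (n : nat) (I J K : config) :
    exchange I J -> exchanges n J K -> exchanges (S n) I K.

From Stdlib Require Import Arith Lia.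

(* Write a = m + a', b = m + b', c = m + c', so that
   a' + b' + c' = r.  The exchanges are scheduled in four phases:
   1. m "rainbow" exchanges (one chip of each colour) give (a',b',c',m,m);
   2. each of the r remaining coloured chips is traded together with two
      jokers, giving (0,0,0,m-r,m+r);
   3. one application of Rule 2 turns three dominoes into seven jokers;
   4. k = p + 3 - (m+r) exchanges of three jokers each bring the number of
      dominoes up to exactly p; the jokers suffice because 2p <= 3m + r.
   In total m + r + 1 + k = p + 4 <= p + 4r + 8 exchanges are used. *)

Lemma exchanges_cat n n' I J K :
  exchanges n I J -> exchanges n' J K -> exchanges (n + n') I K.
Proof.
  induction 1 as [|n I J' J HIJ _ IH]; intros HJK; simpl; [assumption|].
  eapply ex_step; eauto.
Qed.

Lemma exchanges_path (f : nat -> config) (k : nat) :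
  (forall i, i < k -> exchange (f i) (f (S i))) -> exchanges k (f 0) (f k).
Proof.
  revert f; induction k as [|k IH]; intros f Hstep.
  - constructor.
  - apply ex_step with (f 1).
    + apply Hstep; lia.
    + apply (IH (fun i => f (S i))); intros i Hi; apply Hstep; lia.
Qed.

(* Rule 1 with the resulting configuration described by equations, so that
   it applies to targets that are only arithmetically equal to the
   canonical form. *)
Lemma rule1_to (a b c x d ua ub uc j a' b' c' x' d' : nat) :
  ua <= 1 -> ub <= 1 -> uc <= 1 -> ua + ub + uc + j = 3 ->
  ua <= a -> ub <= b -> uc <= c -> j <= x ->
  a' = a - ua -> b' = b - ub -> c' = c - uc -> x' = x - j + 1 -> d' = d + 1 ->
  exchange (Config a b c x d) (Config a' b' c' x' d').
Proof. intros; subst; apply rule1; assumption. Qed.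

(* k repetitions of the same Rule-1 move (using ua, ub, uc coloured chips and
   j jokers).  Before round i there are x + i - i*j jokers, so the jokers
   last as long as k*j <= x + k - 1. *)
Lemma uniform_rounds (k ua ub uc j a b c x d a' b' c' x' d' : nat) :
  ua <= 1 -> ub <= 1 -> uc <= 1 -> ua + ub + uc + j = 3 ->
  k * ua <= a -> k * ub <= b -> k * uc <= c -> k * j <= x + k - 1 ->
  a' = a - k * ua -> b' = b - k * ub -> c' = c - k * uc ->
  x' = x + k - k * j -> d' = d + k ->
  exchanges k (Config a b c x d) (Config a' b' c' x' d').
Proof.
  intros Hua Hub Huc Hsum Ha Hb Hc Hx -> -> -> -> ->.
  set (f i := Config (a - i * ua) (b - i * ub) (c - i * uc) (x + i - i * j) (d + i)).
  replace (Config a b c x d) with (f 0) by (unfold f; f_equal; lia).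
  apply (exchanges_path f); intros i Hi; unfold f.
  apply rule1_to with ua ub uc j; nia.
Qed.

Lemma rainbow_rounds (k a b c x d : nat) :
  k <= a -> k <= b -> k <= c ->
  exchanges k (Config a b c x d) (Config (a - k) (b - k) (c - k) (x + k) (d + k)).
Proof. intros; apply uniform_rounds with 1 1 1 0; lia. Qed.

(* Phase 2: with more jokers than coloured chips, every coloured chip can be
   traded together with two jokers; each such exchange costs one joker net. *)
Lemma clear_colored (a b c x d : nat) :
  a + b + c < x ->
  exchanges (a + b + c) (Config a b c x d)
    (Config 0 0 0 (x - (a + b + c)) (d + (a + b + c))).
Proof.
  intros Hx; rewrite <- !Nat.add_assoc.
  apply exchanges_cat with (Config 0 b c (x - a) (d + a));
    [apply uniform_rounds with 1 0 0 2; lia|].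
  apply exchanges_cat with (Config 0 0 c (x - a - b) (d + a + b));
    [apply uniform_rounds with 0 1 0 2; lia|].
  apply uniform_rounds with 0 0 1 2; lia.
Qed.

(* Phase 4: exchanges of three jokers each cost two jokers net, so with more
   than 2k jokers one can perform k of them. *)
Lemma joker_rounds (k a b c x d : nat) :
  2 * k < x ->
  exchanges k (Config a b c x d) (Config a b c (x - 2 * k) (d + k)).
Proof. intros; apply uniform_rounds with 0 0 0 3; lia. Qed.

Theorem mainTheorem8 (p m r a b c : nat) :
  0 < p -> 2 * p = 3 * m + r -> r <= 2 -> 3 <= m ->
  a + b + c = 2 * p -> m <= a -> m <= b -> m <= c ->
  exists (n : nat) (J : config),
    n <= p + 4 * r + 8 /\ p + 4 * r + 8 <= p + 16 /\
    exchanges n (Config a b c 0 0) J /\ p <= dominoes J.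
Proof.
  intros _ Hpm Hr Hm Hsum Ha Hb Hc.
  set (k := p + 3 - (m + r)).
  assert (Hleft : (a - m) + (b - m) + (c - m) = r) by lia.
  assert (Hrainbow : exchanges m (Config a b c 0 0) (Config (a - m) (b - m) (c - m) m m)).
  { apply rainbow_rounds; lia. }
  assert (Hclear : exchanges r (Config (a - m) (b - m) (c - m) m m)
                     (Config 0 0 0 (m - r) (m + r))).
  { rewrite <- Hleft; apply clear_colored; lia. }
  assert (Hrule2 : exchange (Config 0 0 0 (m - r) (m + r))
                     (Config 0 0 0 (m - r + 7) (m + r - 3))).
  { apply rule2; lia. }
  assert (Hjokers : exchanges k (Config 0 0 0 (m - r + 7) (m + r - 3))
                      (Config 0 0 0 (m - r + 7 - 2 * k) (m + r - 3 + k))).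
  { apply joker_rounds; lia. }
  exists (m + (r + S k)), (Config 0 0 0 (m - r + 7 - 2 * k) (m + r - 3 + k)).
  repeat split; simpl; try lia.
  apply exchanges_cat with (1 := Hrainbow), exchanges_cat with (1 := Hclear).
  eapply ex_step; eassumption.
Qed.
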